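(* Let $G$ be the digraph with vertex set $\{v_1,\dots,v_{17}\}$ and the $27$ arcs $(v_1,v_2)$, $(v_2,v_5)$, $(v_2,v_3)$, $(v_3,v_5)$, $(v_3,v_4)$, $(v_4,v_5)$, $(v_5,v_9)$, $(v_5,v_7)$, $(v_5,v_6)$, $(v_6,v_7)$, $(v_7,v_9)$, $(v_7,v_8)$, $(v_8,v_9)$, $(v_9,v_{16})$, $(v_9,v_{13})$, $(v_9,v_{11})$, $(v_9,v_{10})$, $(v_{10},v_{11})$, $(v_{11},v_{13})$, $(v_{11},v_{12})$, $(v_{12},v_{13})$, $(v_{13},v_{16})$, $(v_{13},v_{15})$, $(v_{13},v_{14})$, $(v_{14},v_{15})$, $(v_{15},v_{16})$, $(v_{16},v_{17})$. Then $G$ is an esp-digraph and $\chi'_o(G)=7$. In particular the bound $\chi'_o(G)\le 7$ for esp-digraphs is best possible.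
   Context: An oriented $r$-arc-coloring of a digraph $G=(V,E)$ is a map $c:E\to\{1,\dots,r\}$ such that (i) $c((u,v))\ne c((v,w))$ for every two arcs $(u,v),(v,w)\in E$, and (ii) $c((u,v))\ne c((y,z))$ for all arcs $(u,v),(v,w),(x,y),(y,z)\in E$ with $c((v,w))=c((x,y))$. The oriented chromatic index $\chi'_o(G)$ is the smallest $r$ for which such a coloring exists. Edge series-parallel (multi)digraphs (esp-digraphs) are defined recursively, each with a distinguished source and sink: (i) a digraph with two distinct vertices $u,v$ and the single arc $(u,v)$ is an esp-digraph with source $u$ and sink $v$; (ii) if $G_1,G_2$ are vertex-disjoint esp-digraphs, then the parallel composition $G_1\cup G_2$ (identify the source of $G_1$ with the source of $G_2$ and the sink of $G_1$ with the sink of $G_2$; arcs are united, possibly creating parallel arcs) is an esp-digraph with these identified source and sink, and the series composition $G_1\times G_2$ (identify the sink of $G_1$ with the source of $G_2$) is an esp-digraph with source the source of $G_1$ and sink the sink of $G_2$. *)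

From mathcomp Require Import all_boot.
Set Implicit Arguments. Unset Strict Implicit. Unset Printing Implicit Defensive.

(* A (multi)digraph on the vertex set {0,...,n-1} (vertices are nats) is given
   by its list of arcs; arcs are identified by their position in the list, so
   parallel arcs are allowed. *)
Definition arcs_t := seq (nat * nat).

Definition oriented_arc_coloring (A : arcs_t) (r : nat)
    (c : 'I_(size A) -> 'I_r) : Prop :=
  (forall a b : 'I_(size A),
      (nth (0,0) A a).2 = (nth (0,0) A b).1 -> c a <> c b) /\
  (forall a b d e : 'I_(size A),
      (nth (0,0) A a).2 = (nth (0,0) A b).1 ->
      (nth (0,0) A d).2 = (nth (0,0) A e).1 ->
      c b = c d -> c a <> c e).

Definition has_oriented_coloring (A : arcs_t) (r : nat) : Prop :=
  exists c : 'I_(size A) -> 'I_r, oriented_arc_coloring c.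

Definition oriented_chromatic_index_is (A : arcs_t) (k : nat) : Prop :=
  has_oriented_coloring A k /\ forall r, r < k -> ~ has_oriented_coloring A r.

Inductive esp_term : Type :=
| EArc : esp_term
| EPar : esp_term -> esp_term -> esp_term
| ESer : esp_term -> esp_term -> esp_term.

(* Realization: (number of vertices n, source, sink, arcs), vertices 0..n-1. *)
Record esp_graph := EspGraph { eg_n : nat; eg_s : nat; eg_t : nat; eg_arcs : arcs_t }.

Definition map_arcs (f : nat -> nat) (A : arcs_t) : arcs_t :=
  [seq (f a.1, f a.2) | a <- A].

Fixpoint realize (e : esp_term) : esp_graph :=
  match e with
  | EArc => EspGraph 2 0 1 [:: (0, 1)]
  | ESer e1 e2 =>
      let g1 := realize e1 in let g2 := realize e2 in
      (* vertices of g2 renamed; source of g2 identified with sink of g1 *)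
      let f v := if v == eg_s g2 then eg_t g1
                 else if v < eg_s g2 then eg_n g1 + v else eg_n g1 + v - 1 in
      EspGraph (eg_n g1 + eg_n g2 - 1) (eg_s g1) (f (eg_t g2))
               (eg_arcs g1 ++ map_arcs f (eg_arcs g2))
  | EPar e1 e2 =>
      let g1 := realize e1 in let g2 := realize e2 in
      (* sources identified, sinks identified, other vertices of g2 renamed *)
      let f v := if v == eg_s g2 then eg_s g1
                 else if v == eg_t g2 then eg_t g1
                 else eg_n g1 + v - (eg_s g2 < v) - (eg_t g2 < v) in
      EspGraph (eg_n g1 + eg_n g2 - 2) (eg_s g1) (eg_t g1)
               (eg_arcs g1 ++ map_arcs f (eg_arcs g2))
  end.

(* The digraph on vertices {0..n-1} with arc list A is an esp-digraph: it is
   isomorphic (as a multidigraph) to the realization of some esp expression. *)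
Definition is_esp (n : nat) (A : arcs_t) : Prop :=
  exists (e : esp_term) (phi : nat -> nat),
    eg_n (realize e) = n /\
    (forall v, v < n -> phi v < n) /\
    {in [pred v | v < n] &, injective phi} /\
    perm_eq (map_arcs phi (eg_arcs (realize e))) A.

(* The digraph of the statement; vertex v_i is represented by i-1. *)
Definition G_arcs_1based : arcs_t :=
  [:: (1,2); (2,5); (2,3); (3,5); (3,4); (4,5); (5,9); (5,7); (5,6); (6,7);
      (7,9); (7,8); (8,9); (9,16); (9,13); (9,11); (9,10); (10,11); (11,13);
      (11,12); (12,13); (13,16); (13,15); (13,14); (14,15); (15,16); (16,17)].

Definition G_arcs : arcs_t := map_arcs (fun v => v.-1) G_arcs_1based.

From mathcomp Require Import all_boot.

Set Implicit Arguments.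
Unset Strict Implicit.
Unset Printing Implicit Defensive.

(* A 7-coloring and an esp decomposition of G are given explicitly. For the lower
   bound, a coloring is oriented iff the pairs of colors of consecutive arcs form
   a digraph on the colors without loops or opposite arcs, a condition inherited
   by every prefix of the arc list. Renaming colors turns any coloring into a
   restricted-growth sequence, where each arc uses at most one color unused by the
   arcs before it. Building all such prefixes with 6 colors arc by arc leaves no
   coloring of all 27 arcs. *)

Definition fresh_color (s : seq nat) : nat := foldr (fun x m => maxn x.+1 m) 0 s.

Lemma fresh_color_gt s x : x \in s -> x < fresh_color s.
Proof.
elim: s => //= y s IHs; rewrite inE leq_max => /predU1P[-> | /IHs ->].
  by rewrite ltnSn.
by rewrite orbT.
Qed.

Definition restricted_growth (g : nat -> nat) (k : nat) : Prop :=
  forall i, i < k -> g i <= fresh_color (mkseq g i).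

Definition swap_nat (x y u : nat) : nat :=
  if u == x then y else if u == y then x else u.

Lemma swap_natK x y : involutive (swap_nat x y).
Proof.
move=> u; rewrite /swap_nat.
case: (eqVneq u x) => [-> | ux]; first by rewrite eqxx; case: eqVneq.
case: (eqVneq u y) => [-> | uy]; first by rewrite eqxx.
by rewrite (negbTE ux) (negbTE uy).
Qed.

Section OrientedColorings.

Variable A : arcs_t.

Definition arc_tail i := (nth (0, 0) A i).1.
Definition arc_head i := (nth (0, 0) A i).2.

Definition nat_oriented_coloring (r : nat) (g : nat -> nat) : Prop :=
  [/\ forall i, i < size A -> g i < r,
      forall a b, a < size A -> b < size A -> arc_head a = arc_tail b -> g a <> g b
    & forall a b d e, a < size A -> b < size A -> d < size A -> e < size A ->
        arc_head a = arc_tail b -> arc_head d = arc_tail e -> g b = g d -> g a <> g e].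

Lemma has_oriented_coloringP r :
  has_oriented_coloring A r <-> exists g, nat_oriented_coloring r g.
Proof.
split=> [[c [c_succ c_path]] | [g [g_lt g_succ g_path]]].
- pose g i := oapp (fun a : 'I_(size A) => val (c a)) 0 (insub i).
  have gE i (lt_i : i < size A) : g i = c (Sub i lt_i) by rewrite /g insubT.
  exists g; split=> [i lt_i | a b lt_a lt_b ab | a b d e lt_a lt_b lt_d lt_e ab de].
  + by rewrite (gE _ lt_i).
  + by rewrite (gE _ lt_a) (gE _ lt_b) => /val_inj; apply: c_succ.
  + rewrite (gE _ lt_a) (gE _ lt_b) (gE _ lt_d) (gE _ lt_e) => /val_inj bd /val_inj.
    exact: c_path bd.
- exists (fun a => Ordinal (g_lt _ (ltn_ord a))); split.
  + by move=> a b ab [gab]; apply: (g_succ a b).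
  + by move=> a b d e ab de [bd] [ae]; apply: (g_path a b d e).
Qed.

Lemma has_oriented_coloringW r r' :
  r <= r' -> has_oriented_coloring A r -> has_oriented_coloring A r'.
Proof.
move=> le_rr' /has_oriented_coloringP[g [g_lt g_succ g_path]].
by apply/has_oriented_coloringP; exists g; split=> // i /g_lt /leq_trans; apply.
Qed.

Definition color_arcs (s : seq nat) : seq (nat * nat) :=
  flatten [seq [seq (nth 0 s i, nth 0 s j) | j <- iota 0 (size s) & arc_head i == arc_tail j]
          | i <- iota 0 (size s)].

Definition oriented_color_arcs (s : seq nat) : bool :=
  let P := color_arcs s in all (fun p => (p.1 != p.2) && ((p.2, p.1) \notin P)) P.

Lemma color_arcsP s p :
  reflect (exists i j, [/\ i < size s, j < size s, arc_head i = arc_tail j &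
                          p = (nth 0 s i, nth 0 s j)])
          (p \in color_arcs s).
Proof.
apply: (iffP flatten_mapP) => [[i] | [i [j [lt_i lt_j ij ->]]]].
  rewrite mem_iota => /andP[_ lt_i] /mapP[j].
  by rewrite mem_filter mem_iota => /andP[/eqP ij /andP[_ lt_j]] ->; exists i, j.
exists i; first by rewrite mem_iota.
by apply/mapP; exists j; rewrite // mem_filter mem_iota lt_j ij eqxx.
Qed.

Lemma oriented_color_arcs_mkseq r g k :
  nat_oriented_coloring r g -> k <= size A -> oriented_color_arcs (mkseq g k).
Proof.
move=> [_ g_succ g_path] le_kA; apply/allP => p /color_arcsP[i [j []]].
rewrite size_mkseq => lt_i lt_j ij ->.
have lt_A l : l < k -> l < size A by move/leq_trans; apply.
rewrite /= !nth_mkseq //; apply/andP; split; first by apply/eqP/g_succ; rewrite ?lt_A.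
apply/color_arcsP => -[i' [j' []]]; rewrite size_mkseq => lt_i' lt_j' ij' [].
rewrite !nth_mkseq // => gji' gij'.
by apply: (g_path i j i' j'); rewrite ?lt_A.
Qed.

Lemma nat_oriented_coloring_nth r s :
  size s = size A -> all (fun x => x < r) s -> oriented_color_arcs s ->
  nat_oriented_coloring r (nth 0 s).
Proof.
move=> sizeE /allP s_lt /allP s_ok.
have color_arc a b : a < size A -> b < size A -> arc_head a = arc_tail b ->
    (nth 0 s a, nth 0 s b) \in color_arcs s.
  by move=> lt_a lt_b ab; apply/color_arcsP; exists a, b; rewrite sizeE.
split=> [i lt_i | a b lt_a lt_b ab | a b d e lt_a lt_b lt_d lt_e ab de bd ae].
- by apply/s_lt/mem_nth; rewrite sizeE.
- by have /andP[/eqP] := s_ok _ (color_arc a b lt_a lt_b ab).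
- have /andP[_ /negP[]] := s_ok _ (color_arc a b lt_a lt_b ab).
  by rewrite /= bd ae; apply: color_arc.
Qed.

Lemma nat_oriented_coloring_relabel r g (sigma : nat -> nat) :
  injective sigma -> (forall i, i < size A -> sigma (g i) < r) ->
  nat_oriented_coloring r g -> nat_oriented_coloring r (sigma \o g).
Proof.
move=> sigma_inj sigma_lt [_ g_succ g_path].
split=> // [a b lt_a lt_b ab /sigma_inj | a b d e lt_a lt_b lt_d lt_e ab de].
  exact: g_succ.
by move=> /sigma_inj bd /sigma_inj; apply: g_path bd.
Qed.

Lemma exists_restricted_growth_coloring r g k :
  nat_oriented_coloring r g -> k <= size A ->
  exists2 h, nat_oriented_coloring r h & restricted_growth h k.
Proof.
move=> g_col; elim: k => [_ | k IHk lt_kA]; first by exists g.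
have [h h_col h_rg] := IHk (ltnW lt_kA).
have [h_lt _ _] := h_col.
set m := fresh_color (mkseq h k).
have h_prefix i : i < k -> h i < m.
  by move=> lt_ik; apply/fresh_color_gt/map_f; rewrite mem_iota.
have rg_step h' : (forall i, i < k -> h' i = h i) -> h' k <= m ->
    restricted_growth h' k.+1.
  move=> h'E le_h'k_m.
  have mkseqE j : j <= k -> mkseq h' j = mkseq h j.
    move=> le_jk; apply/eq_in_map => l; rewrite mem_iota => /andP[_ lt_lj].
    exact/h'E/(leq_trans lt_lj).
  move=> i; rewrite ltnS leq_eqVlt => /predU1P[-> | lt_ik]; first by rewrite mkseqE.
  by rewrite h'E // mkseqE ?h_rg // ltnW.
have [le_hk_m | lt_m_hk] := leqP (h k) m; first by exists h => //; apply: rg_step.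
(* A color beyond [m] is renamed to [m] by swapping the two. *)
exists (swap_nat m (h k) \o h).
  apply: nat_oriented_coloring_relabel h_col => [|i lt_iA]; first exact/can_inj/swap_natK.
  rewrite /swap_nat /=; case: eqP => _; first exact: h_lt.
  by case: eqP => _; [exact: ltn_trans lt_m_hk (h_lt _ lt_kA) | exact: h_lt].
apply: rg_step => [i /h_prefix lt_hi_m | ]; rewrite /= /swap_nat.
  by rewrite (ltn_eqF lt_hi_m) (ltn_eqF (ltn_trans lt_hi_m lt_m_hk)).
by rewrite eqxx (gtn_eqF lt_m_hk).
Qed.

Fixpoint canonical_colorings (r k : nat) : seq (seq nat) :=
  if k is k.+1 then
    [seq t <- [seq rcons s x | s <- canonical_colorings r k,
                               x <- iota 0 (minn r (fresh_color s).+1)]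
       | oriented_color_arcs t]
  else [:: [::]].

Lemma mem_canonical_colorings r g k :
  nat_oriented_coloring r g -> k <= size A -> restricted_growth g k ->
  mkseq g k \in canonical_colorings r k.
Proof.
move=> g_col; elim: k => [|k IHk] lt_kA g_rg /=; first by rewrite inE.
rewrite mem_filter (oriented_color_arcs_mkseq g_col lt_kA) mkseqS.
have [g_lt _ _] := g_col.
apply: allpairs_f_dep; first by apply: IHk (ltnW lt_kA) _ => i /ltnW; apply: g_rg.
by rewrite mem_iota leq_min g_lt // ltnS g_rg.
Qed.

Theorem no_oriented_coloring r :
  canonical_colorings r (size A) = [::] -> ~ has_oriented_coloring A r.
Proof.
move=> no_canonical /has_oriented_coloringP[g g_col].
have [h h_col h_rg] := exists_restricted_growth_coloring g_col (leqnn _).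
by have := mem_canonical_colorings h_col (leqnn _) h_rg; rewrite no_canonical.
Qed.

End OrientedColorings.

Lemma nth_perm_iota (s : seq nat) n :
  perm_eq s (iota 0 n) ->
  (forall v, v < n -> nth 0 s v < n) /\ {in [pred v | v < n] &, injective (nth 0 s)}.
Proof.
move=> s_perm; have sizeE : size s = n by rewrite (perm_size s_perm) size_iota.
split=> [v lt_vn | ].
  have : nth 0 s v \in iota 0 n by rewrite -(perm_mem s_perm) mem_nth // sizeE.
  by rewrite mem_iota.
by rewrite -sizeE; apply/uniqP; rewrite (perm_uniq s_perm) iota_uniq.
Qed.

Definition triangle : esp_term := EPar EArc (ESer EArc EArc).

Definition G_term : esp_term :=
  ESer (ESer (ESer (ESer EArc (EPar EArc (ESer EArc triangle)))
                   (EPar EArc (ESer triangle triangle)))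
             (EPar EArc (ESer (EPar EArc (ESer triangle triangle))
                              (EPar EArc (ESer triangle EArc)))))
       EArc.

Definition G_relabelling : seq nat :=
  [:: 0; 1; 4; 2; 3; 8; 6; 5; 7; 15; 12; 10; 9; 11; 14; 13; 16].

Lemma G_is_esp : is_esp 17 G_arcs.
Proof.
have [relabel_lt relabel_inj] := @nth_perm_iota G_relabelling 17 isT.
by exists G_term, (nth 0 G_relabelling); split=> //; vm_compute.
Qed.

Definition G_coloring : seq nat :=
  [:: 0; 1; 1; 2; 2; 0; 3; 3; 3; 4; 5; 5; 0; 6; 6; 6; 6; 1; 2; 2; 3; 4; 4; 4; 5; 0; 1].

Lemma G_has_7_coloring : has_oriented_coloring G_arcs 7.
Proof.
by apply/has_oriented_coloringP; exists (nth 0 G_coloring); apply: nat_oriented_coloring_nth.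
Qed.

Lemma G_has_no_6_coloring : ~ has_oriented_coloring G_arcs 6.
Proof. by apply: no_oriented_coloring; vm_compute. Qed.

Theorem mainTheorem7 :
  is_esp 17 G_arcs /\ oriented_chromatic_index_is G_arcs 7.
Proof.
split; first exact: G_is_esp.
split=> [|r lt_r7]; first exact: G_has_7_coloring.
by move/(has_oriented_coloringW (lt_r7 : r <= 6)); apply: G_has_no_6_coloring.
Qed.
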